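(* For every $(t,h)\in[0,T)\times\mathbb{R}_+$, the map $z\mapsto\widehat J(t,z,h)$ is non-decreasing on $\mathbb{R}_+$.
   Context: Fix constants $T>0$, $r>0$, $\mu\in\mathbb{R}$, $\sigma>0$, $\rho>0$, $m^0\ge 0$, $m^1\ge 0$, $\kappa>0$, $\delta>0$, $\alpha\in(0,1)$, $I>0$ and a number $f(I)>0$. Write $\mathbb{R}_+=(0,\infty)$, $\mathcal{O}=[0,T]\times\mathbb{R}_+^2$, $\theta=(\mu-r)/\sigma$. Let $(\Omega,\mathcal{F},\mathbb{F},\mathbb{P})$ be a complete filtered probability space satisfying the usual conditions, carrying a standard $\mathbb{F}$-Brownian motion $B$. Let $\widehat u(z,h)=(1-\alpha)(z/\alpha)^{\alpha/(\alpha-1)}h$. For $(t,z,h)\in\mathcal{O}$ and $s\in[t,T]$ let $H^2_s=he^{-\delta(s-t)}+\frac{f(I)}{\delta}(1-e^{-\delta(s-t)})$, $M^{H^2}_s=m^0+m^1(H^2_s)^{-\kappa}$, and let $Z^2$ solve $dZ^2_s=(\rho-r+M^{H^2}_s)Z^2_s\,ds-\theta Z^2_s\,dB_s$, $Z^2_t=z$. Define $W(t,z,h)=\mathbb{E}\big[\int_t^T e^{-\int_t^s(\rho+M^{H^2}_u)du}\,\widehat u(Z^2_s,H^2_s)\,ds\big]$; subscripts denote partial derivatives. For $z,h>0$ and $s\ge0$ let $H^1_s=he^{-\delta s}$, $M^{H^1}_s=m^0+m^1(H^1_s)^{-\kappa}$ and $Z^1_s=z\exp\big(-(r+\tfrac12\theta^2)s-\theta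 B_s+\int_0^s(\rho+M^{H^1}_u)du\big)$, with $\mathbb{E}_{z,h}$ the corresponding expectation. For $(t,z,h)\in\mathcal{O}$, $\widehat J(t,z,h)=\sup_{0\le\tau\le T-t}\mathbb{E}_{z,h}\Big[\int_0^\tau\Big(Iz\,e^{-rs-\theta B_s-\frac12\theta^2 s}-e^{-\int_0^s(\rho+M^{H^1}_u)du}f(I)W_h(t+s,Z^1_s,H^1_s)\Big)ds\Big]$ over $\mathbb{F}$-stopping times with values in $[0,T-t]$. *)

From HB Require Import structures.
From mathcomp Require Import all_boot all_order all_algebra.
From mathcomp Require Import all_classical all_reals all_analysis.
Set Implicit Arguments. Unset Strict Implicit. Unset Printing Implicit Defensive.
Import Order.TTheory GRing.Theory Num.Theory.
Import numFieldNormedType.Exports.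
Local Open Scope classical_set_scope.
Local Open Scope ring_scope.

Section Model.
Context {R : realType} {d : measure_display} {Omega : measurableType d}.

Definition is_filtration (F : R -> set (set Omega)) :=
  (forall t, 0 <= t -> @sigma_algebra Omega setT (F t)) /\
  (forall t, 0 <= t -> F t `<=` measurable) /\
  (forall s t, 0 <= s -> s <= t -> F s `<=` F t).

Definition usual_conditions (P : probability Omega R) (F : R -> set (set Omega)) :=
  is_filtration F /\
  (forall N : set Omega, P.-negligible N -> measurable N) /\
  (forall N : set Omega, P.-negligible N -> F 0 N) /\
  (forall t, 0 <= t -> forall A, F t A <-> (forall s, t < s -> F s A)).

Definition is_F_brownian_motion (P : probability Omega R)
    (F : R -> set (set Omega)) (B : R -> Omega -> R) :=
  {ae P, forall w, B 0 w = 0} /\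
  {ae P, forall w, {within `[0, +oo[, continuous (fun t => B t w)}} /\
  (forall t, 0 <= t -> forall C : set R, measurable C -> F t (B t @^-1` C)) /\
  (forall s t, 0 <= s -> s < t -> forall C : set R, measurable C ->
     P ((fun w => B t w - B s w) @^-1` C) = normal_prob 0 (Num.sqrt (t - s)) C) /\
  (forall s t, 0 <= s -> s < t -> forall A, F s A -> forall C : set R, measurable C ->
     P (A `&` ((fun w => B t w - B s w) @^-1` C)) =
     (P A * P ((fun w => (B t w - B s w)%R) @^-1` C))%E).

Definition stopping_time_le (F : R -> set (set Omega)) (a : R) (tau : Omega -> R) :=
  (forall w, 0 <= tau w <= a) /\ (forall u, 0 <= u -> F u [set w | tau w <= u]).

Variables (P : probability Omega R) (B : R -> Omega -> R).
Variables (T r mu sigma rho m0 m1 kappa delta alpha I fI : R).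

Definition theta : R := (mu - r) / sigma.

Definition leb := (@lebesgue_measure R).

Definition dint (a b : R) (g : R -> R) : R := Rintegral leb `[a, b] g.

Definition uhat (z h : R) : R :=
  (1 - alpha) * powR (z / alpha) (alpha / (alpha - 1)) * h.

Definition Mfun (x : R) : R := m0 + m1 * powR x (- kappa).

Definition H2 (t h s : R) : R :=
  h * expR (- delta * (s - t)) + fI / delta * (1 - expR (- delta * (s - t))).

(* explicit (unique strong) solution of
   dZ = (rho - r + M^{H2}) Z ds - theta Z dB,  Z_t = z *)
Definition Z2 (t z h s : R) (w : Omega) : R :=
  z * expR (dint t s (fun u => rho - r + Mfun (H2 t h u))
            - theta * (B s w - B t w) - theta ^+ 2 / 2 * (s - t)).

Definition W (t z h : R) : R :=
  fine (integral P setT (fun w =>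
    integral leb `[t, T] (fun s =>
      (expR (- dint t s (fun u => rho + Mfun (H2 t h u))) *
       uhat (Z2 t z h s w) (H2 t h s))%:E))).

Definition W_h (t z h : R) : R := derive1 (fun h' => W t z h') h.

Definition H1 (h s : R) : R := h * expR (- delta * s).

Definition Z1 (z h s : R) (w : Omega) : R :=
  z * expR (- (r + theta ^+ 2 / 2) * s - theta * B s w
            + dint 0 s (fun u => rho + Mfun (H1 h u))).

Definition J_integrand (t z h s : R) (w : Omega) : R :=
  I * z * expR (- r * s - theta * B s w - theta ^+ 2 / 2 * s)
  - expR (- dint 0 s (fun u => rho + Mfun (H1 h u))) * fI
    * W_h (t + s) (Z1 z h s w) (H1 h s).

Definition Jhat (F : R -> set (set Omega)) (t z h : R) : \bar R :=
  ereal_sup [set v | exists tau, stopping_time_le F (T - t) tau /\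
     v = integral P setT (fun w =>
           integral leb `[0, tau w] (fun s => (J_integrand t z h s w)%:E))].

End Model.

From HB Require Import structures.
From mathcomp Require Import all_boot all_order all_algebra.
From mathcomp Require Import all_classical all_reals all_analysis.
From mathcomp Require Import ring lra.
Import Order.TTheory GRing.Theory Num.Theory.
Import numFieldNormedType.Exports.
Local Open Scope classical_set_scope.
Local Open Scope ring_scope.

(** The processes Z^1 and Z^2 are linear in their initial value, and [uhat] is
    homogeneous of degree p = alpha / (alpha - 1) < 0 in its first argument, so
    W(t, y, h) = y^p W(t, 1, h) and W_h(t, y, h) = y^p W_h(t, 1, h).  A higher
    initial health h raises H^2, hence lowers the mortality rate M^{H^2} and Z^2,
    so W(t, 1, .) is nondecreasing and W_h(t, 1, h) >= 0.  Thus W_h(t, y, h) is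
    nonincreasing in y, the integrand of [Jhat] is pointwise nondecreasing in z,
    and so is its supremum over stopping times. *)

Lemma fineZ (R : realDomainType) (c : R) (x : \bar R) : fine (c%:E * x) = c * fine x.
Proof.
case: x => [x| |]; rewrite /= ?mulr0//; [rewrite mulry|rewrite mulrNy];
  by case: sgrP => _; rewrite ?mul0e ?mul1e ?mulN1e.
Qed.

Lemma le0_ger_powR (R : realType) (q x y : R) : q <= 0 -> 0 < x -> x <= y ->
  powR y q <= powR x q.
Proof.
move=> q0 x0 xy; have y0 : 0 < y by exact: lt_le_trans xy.
have -> : q = - (- q) by rewrite opprK.
rewrite (powRN y) (powRN x) lef_pV2 ?posrE ?powR_gt0//.
by apply: ge0_ler_powR; rewrite ?nnegrE ?oppr_ge0// ltW.
Qed.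

(* The integrands of [W] and [Jhat] are not known to be measurable ([B] is not
   assumed jointly measurable in (s, w)), so monotonicity and homogeneity of the
   integral are derived from its definition as a supremum over simple functions. *)
Section integral_without_measurability.
Context d (T : measurableType d) (R : realType).
Variable mu : {measure set T -> \bar R}.
Implicit Types (D : set T) (f g : T -> \bar R).
Import HBNNSimple.

Lemma le_integral_pointwise D f g : (forall x, D x -> f x <= g x)%E ->
  (\int[mu]_(x in D) f x <= \int[mu]_(x in D) g x)%E.
Proof.
move=> fg; have fg' : {in D, forall x, (f x <= g x)%E} by move=> x; rewrite inE; exact: fg.
rewrite (integralE _ _ f) (integralE _ _ g); apply: leeB.
- rewrite !ge0_integralE; [|by move=> x _; exact: funepos_ge0..].
  apply: ereal_sup_le => _ [h /= hf <-]; exists h => //= x.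
  apply: (le_trans (hf x)); rewrite /patch; case: ifPn => // Dx.
  exact: (funepos_le fg').
- rewrite !ge0_integralE; [|by move=> x _; exact: funeneg_ge0..].
  apply: ereal_sup_le => _ [h /= hf <-]; exists h => //= x.
  apply: (le_trans (hf x)); rewrite /patch; case: ifPn => // Dx.
  exact: (funeneg_le fg').
Qed.

Lemma ge0_integralZl_pos D f (c : R) : 0 < c -> (forall x, D x -> 0 <= f x)%E ->
  (\int[mu]_(x in D) (c%:E * f x) = c%:E * \int[mu]_(x in D) f x)%E.
Proof.
move=> c0 f0.
rewrite ge0_integralE; last by move=> x Dx; rewrite mule_ge0 ?f0// lee_fin ltW.
rewrite ge0_integralE// -ereal_sup_pZl//; congr ereal_sup.
rewrite erestrict_scale; apply/seteqP; split => y.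
- move=> [h /= hf <-].
  have ci0 : 0 <= c^-1 by rewrite invr_ge0 ltW.
  exists (sintegral mu (scale_nnsfun h ci0)).
    by exists (scale_nnsfun h ci0) => //= x; rewrite EFinM lee_pdivrMl.
  rewrite (_ : scale_nnsfun h ci0 = cst c^-1 \* h :> (T -> R))//.
  by rewrite sintegralrM muleA -EFinM divff ?gt_eqF// mul1e.
- move=> [_ [h /= hf <-] <-].
  exists (scale_nnsfun h (ltW c0)); first by move=> x /=; rewrite EFinM lee_pmul2l.
  by rewrite (_ : scale_nnsfun h (ltW c0) = cst c \* h :> (T -> R))// sintegralrM.
Qed.

Lemma integralZl_pos D f (c : R) : 0 < c ->
  (\int[mu]_(x in D) (c%:E * f x) = c%:E * \int[mu]_(x in D) f x)%E.
Proof.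
move=> c0; rewrite integralE [in RHS]integralE ge0_funeposM ?ltW// ge0_funenegM ?ltW//.
rewrite !ge0_integralZl_pos//;
  try by move=> x _; first [exact: funepos_ge0|exact: funeneg_ge0].
have : (0 <= \int[mu]_(x in D) f^\+ x)%E by apply: integral_ge0 => x _; exact: funepos_ge0.
have : (0 <= \int[mu]_(x in D) f^\- x)%E by apply: integral_ge0 => x _; exact: funeneg_ge0.
case: (\int[mu]_(x in D) f^\+ x)%E => [a| |]; case: (\int[mu]_(x in D) f^\- x)%E => [b| |] //= _ _.
- by rewrite -!EFinM -EFinD mulrBr.
- by rewrite addeNy gt0_muley ?gt0_muleNy ?lte_fin.
- by rewrite addye// gt0_muley ?lte_fin.
- by rewrite gt0_muley ?lte_fin// addeNy gt0_muleNy ?lte_fin.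
Qed.

Lemma le_Rintegral_bounded D (a b : R) (g1 g2 : T -> R) :
  measurable D -> (mu D < +oo)%E ->
  (forall x, D x -> [/\ a <= g1 x, g1 x <= g2 x & g2 x <= b]) ->
  Rintegral mu D g1 <= Rintegral mu D g2.
Proof.
move=> mD muDfin g12; rewrite /Rintegral.
have [L muDE] : exists L : R, mu D = L%:E.
  by exists (fine (mu D)); rewrite fineK// ge0_fin_numE.
have Ia : ((a * L)%:E <= \int[mu]_(x in D) (g1 x)%:E)%E.
  rewrite EFinM -muDE -integral_cst//; apply: le_integral_pointwise => x Dx.
  by rewrite lee_fin; case: (g12 x Dx).
have I12 : (\int[mu]_(x in D) (g1 x)%:E <= \int[mu]_(x in D) (g2 x)%:E)%E.
  by apply: le_integral_pointwise => x Dx; rewrite lee_fin; case: (g12 x Dx).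
have Ib : (\int[mu]_(x in D) (g2 x)%:E <= (b * L)%:E)%E.
  rewrite EFinM -muDE -integral_cst//; apply: le_integral_pointwise => x Dx.
  by rewrite lee_fin; case: (g12 x Dx).
have fin y : ((a * L)%:E <= y -> y <= (b * L)%:E -> y \is a fin_num)%E.
  by move=> ay yb; rewrite fin_numElt (lt_le_trans (ltNyr _) ay) (le_lt_trans yb (ltry _)).
have f1 : (\int[mu]_(x in D) (g1 x)%:E \is a fin_num)%E.
  by apply: fin => //; exact: le_trans I12 Ib.
have f2 : (\int[mu]_(x in D) (g2 x)%:E \is a fin_num)%E.
  by apply: fin => //; exact: le_trans Ia I12.
exact: fine_le f1 f2 I12.
Qed.

End integral_without_measurability.

Section difference_quotients.
Variable R : realType.

Lemma derive1Zl (g : R -> R) (c a : R) :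
  derive1 (fun x => c * g x) a = c * derive1 g a.
Proof.
rewrite /derive1; set q := fun h => h^-1 *: (g (h + a) - g a).
have -> : (fun h => h^-1 *: (c * g (h + a) - c * g a)) = c *: q.
  by apply/funext => h; rewrite -[RHS]/(c * q h) /q /= -mulrBr mulrCA.
have [->|c0] := eqVneq c 0.
  by rewrite scale0r mul0r; apply: lim_cst.
have [cvq|dvq] := pselect (cvg (q @ 0^')); first by rewrite (limZl_tmp _ cvq).
(* Both quotients diverge, so both limits are the junk value [point = 0]. *)
have dvcq : ~ cvg ((c *: q) @ 0^') by rewrite is_cvgZlE.
by rewrite (dvgP dvq) (dvgP dvcq) mulr0.
Qed.

(* The second alternative is the right difference quotient of [fine \o X] where
   [X] jumps to +oo ([fine] sends it to 0); it is ruled out near 0 by convergence. *)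
Lemma ge0_lim_quotient_at_right (q : R -> R) (c l : R) : 0 <= c ->
  (forall e, 0 < e -> 0 <= q e \/ e * q e = - c) ->
  q e @[e --> 0^'+] --> l -> 0 <= l.
Proof.
move=> c0 q_dich ql.
have id0 : (fun e : R => e) @ 0^'+ --> (0 : R).
  by apply: cvg_at_right_filter; exact: cvg_id.
have eq0 : (fun e => e * q e) @ 0^'+ --> (0 : R).
  by rewrite -[X in _ --> X](mul0r l); exact: cvgM.
suff : \forall e \near 0^'+, 0 <= q e by apply: cvgr_to_ge ql.
have [c_eq0|c_neq0] := eqVneq c 0.
  near=> e; have e0 : 0 < e by near: e; exact: nbhs_right_gt.
  case: (q_dich e e0) => // /eqP.
  by rewrite c_eq0 oppr0 mulf_eq0 gt_eqF//= => /eqP ->.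
have c_gt0 : 0 < c by rewrite lt_neqAle eq_sym c_neq0.
have ec : \forall e \near 0^'+, - c / 2 <= e * q e.
  by apply: (cvgr_ge _ eq0); rewrite ltr_pdivrMr// mul0r oppr_lt0.
near=> e; have e0 : 0 < e by near: e; exact: nbhs_right_gt.
have : - c / 2 <= e * q e by near: e; exact: ec.
case: (q_dich e e0) => // ->; lra.
Unshelve. all: by end_near.
Qed.

Lemma derive1_fine_ge0 (X : R -> \bar R) (a : R) :
  (0 <= X a)%E -> (forall x, a <= x -> (X a <= X x)%E) -> 0 <= derive1 (fine \o X) a.
Proof.
move=> Xa0 Xnd; rewrite /derive1.
set q := fun h => h^-1 *: ((fine \o X) (h + a) - (fine \o X) a).
have [cvq|dvq] := pselect (cvg (q @ 0^')); last by rewrite (dvgP dvq).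
apply: (@ge0_lim_quotient_at_right q (fine (X a))); first exact: fine_ge0.
  move=> e e0; rewrite /q /=.
  have : (X a <= X (e + a)%R)%E by apply: Xnd; lra.
  move: Xa0; case: (X a) => [x| |]; case: (X (e + a)%R) => [y| |] //=.
  - by rewrite !lee_fin => _ xy; left; rewrite mulr_ge0 ?invr_ge0 ?subr_ge0// ltW.
  - by right; rewrite [_ *: _]/(_ * _) mulrA divff ?gt_eqF// mul1r sub0r.
  - by left; rewrite subrr scaler0.
exact: (cvg_dnbhs_at_right cvq).
Qed.

End difference_quotients.

Section model.
Context {R : realType} {d : measure_display} {Omega : measurableType d}.
Variables (P : probability Omega R) (B : R -> Omega -> R).
Variables (T r mu sigma rho m0 m1 kappa delta alpha I fI : R).
Hypotheses (m1_ge0 : 0 <= m1) (kappa_ge0 : 0 <= kappa) (delta_ge0 : 0 <= delta)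
  (alpha_gt0 : 0 < alpha) (alpha_lt1 : alpha < 1) (fI_ge0 : 0 <= fI) (I_ge0 : 0 <= I).

Local Notation M := (Mfun m0 m1 kappa).
Local Notation H := (H2 delta fI).
Local Notation Z := (Z2 B r mu sigma rho m0 m1 kappa delta fI).
Local Notation W := (W P B T r mu sigma rho m0 m1 kappa delta alpha fI).
Local Notation W_h := (W_h P B T r mu sigma rho m0 m1 kappa delta alpha fI).

Let p := alpha / (alpha - 1).

Let p_le0 : p <= 0.
Proof. by rewrite /p pmulr_rle0 // invr_le0 subr_le0 ltW. Qed.

Lemma Mfun_ge x : m0 <= M x.
Proof. by rewrite /Mfun lerDl mulr_ge0 // powR_ge0. Qed.

Lemma Mfun_antitone x y : 0 < x -> x <= y -> M y <= M x.
Proof.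
by move=> x0 xy; rewrite /Mfun lerD2l ler_wpM2l// le0_ger_powR// oppr_le0.
Qed.

Lemma H2_ge t h u : t <= u -> h * expR (- delta * (u - t)) <= H t h u.
Proof.
move=> tu; rewrite /H2 lerDl mulr_ge0 ?divr_ge0// subr_ge0 -expR0 ler_expR.
by rewrite mulNr oppr_le0 mulr_ge0// subr_ge0.
Qed.

Lemma H2_gt0 t h u : 0 < h -> t <= u -> 0 < H t h u.
Proof. by move=> h0 tu; apply: lt_le_trans (H2_ge t h u tu); rewrite mulr_gt0 ?expR_gt0. Qed.

Lemma le_H2 t h1 h2 u : h1 <= h2 -> H t h1 u <= H t h2 u.
Proof. by move=> h12; rewrite /H2 lerD2r ler_wpM2r// ltW ?expR_gt0. Qed.

Lemma le_dint_Mfun_H2 (K : R) t s h1 h2 : 0 < h1 -> h1 <= h2 -> t <= s ->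
  dint t s (fun u => K + M (H t h2 u)) <= dint t s (fun u => K + M (H t h1 u)).
Proof.
move=> h1_gt0 h12 ts.
(* [m] bounds [H t h1] from below on [t, s], which keeps both integrals finite. *)
pose m := h1 * expR (- delta * (s - t)).
have m_gt0 : 0 < m by rewrite mulr_gt0 ?expR_gt0.
apply: (@le_Rintegral_bounded _ _ _ _ _ (K + m0) (K + M m)).
- exact: measurable_itv.
- have : (@lebesgue_measure R `[t, s]%classic < +oo)%E.
    by rewrite lebesgue_measure_itv; case: ifP => _; rewrite ?ltry.
  by [].
move=> u /=; rewrite in_itv /= => /andP[tu us].
have m_le : m <= H t h1 u.
  apply: le_trans (H2_ge t h1 u tu); apply: ler_wpM2l; first exact: ltW.
  by rewrite ler_expR !mulNr lerN2 ler_wpM2l// lerD2r.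
have H1_gt0 : 0 < H t h1 u by exact: H2_gt0.
by split; rewrite lerD2l ?Mfun_ge ?Mfun_antitone ?le_H2.
Qed.

Lemma Z2_scale t y h s w : Z t y h s w = y * Z t 1 h s w.
Proof. by rewrite /Z2 mul1r. Qed.

Lemma Z2_gt0 t y h s w : 0 < y -> 0 < Z t y h s w.
Proof. by move=> y0; rewrite /Z2 mulr_gt0 ?expR_gt0. Qed.

Lemma Z2_antitone t y h1 h2 s w : 0 <= y -> 0 < h1 -> h1 <= h2 -> t <= s ->
  Z t y h2 s w <= Z t y h1 s w.
Proof.
move=> y0 h1_gt0 h12 ts; rewrite /Z2; apply: ler_wpM2l; first exact: y0.
by rewrite ler_expR !lerD2r le_dint_Mfun_H2.
Qed.

Lemma uhat_ge0 z x : 0 <= x -> 0 <= uhat alpha z x.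
Proof. by move=> x0; rewrite /uhat !mulr_ge0 ?powR_ge0// subr_ge0 ltW. Qed.

Lemma uhat_scale y z x : 0 <= y -> 0 <= z ->
  uhat alpha (y * z) x = powR y p * uhat alpha z x.
Proof.
move=> y0 z0; rewrite /uhat -[y * z / alpha]mulrA.
rewrite (powRM _ y0 (divr_ge0 z0 (ltW alpha_gt0))).
by rewrite /p; ring.
Qed.

Lemma le_uhat z1 z2 x1 x2 : 0 < z2 -> z2 <= z1 -> 0 <= x1 -> x1 <= x2 ->
  uhat alpha z1 x1 <= uhat alpha z2 x2.
Proof.
move=> z2_gt0 z21 x1_ge0 x12; rewrite /uhat.
have alpha1 : 0 <= 1 - alpha by rewrite subr_ge0 ltW.
apply: ler_pM; [by rewrite mulr_ge0 ?powR_ge0|exact: x1_ge0| |exact: x12].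
apply: ler_wpM2l; first exact: alpha1.
apply: le0_ger_powR; [exact: p_le0|by rewrite divr_gt0|].
by apply: ler_wpM2r; [rewrite invr_ge0 ltW|exact: z21].
Qed.

Definition W_integrand (t z h s : R) (w : Omega) : R :=
  expR (- dint t s (fun u => rho + M (H t h u))) * uhat alpha (Z t z h s w) (H t h s).

Lemma WE t z h : W t z h =
  fine (\int[P]_w \int[leb]_(s in `[t, T]) (W_integrand t z h s w)%:E)%E.
Proof. by []. Qed.

Lemma W_integrand_scale t y h s w : 0 < y ->
  W_integrand t y h s w = powR y p * W_integrand t 1 h s w.
Proof.
move=> y0; rewrite /W_integrand Z2_scale uhat_scale ?ltW ?Z2_gt0//.
by rewrite mulrCA.
Qed.

Lemma W_integrand_ge0 t y h s w : 0 < h -> t <= s -> 0 <= W_integrand t y h s w.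
Proof. by move=> h0 ts; rewrite /W_integrand mulr_ge0 ?expR_ge0 ?uhat_ge0 ?ltW ?H2_gt0. Qed.

Lemma W_integrand_nondecreasing t y h1 h2 s w : 0 < y -> 0 < h1 -> h1 <= h2 -> t <= s ->
  W_integrand t y h1 s w <= W_integrand t y h2 s w.
Proof.
move=> y0 h1_gt0 h12 ts; rewrite /W_integrand.
have H1_gt0 : 0 < H t h1 s by exact: H2_gt0.
apply: ler_pM; [exact: expR_ge0|exact/uhat_ge0/ltW| |].
  by rewrite ler_expR lerN2 le_dint_Mfun_H2.
apply: le_uhat; [exact: Z2_gt0|exact: Z2_antitone (ltW y0) h1_gt0 h12 ts|exact: ltW|].
exact: le_H2.
Qed.

Lemma W_scale t y h : 0 < y -> W t y h = powR y p * W t 1 h.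
Proof.
move=> y0; rewrite !WE -fineZ -integralZl_pos ?powR_gt0//; congr fine.
apply: eq_integral => w _; rewrite -integralZl_pos ?powR_gt0//.
by apply: eq_integral => s _; rewrite -EFinM W_integrand_scale.
Qed.

Lemma W_h_scale t y h : 0 < y -> W_h t y h = powR y p * W_h t 1 h.
Proof.
move=> y0; rewrite /W_h -derive1Zl; congr derive1.
by apply/funext => h'; exact: W_scale.
Qed.

Lemma W_h1_ge0 t h : 0 < h -> 0 <= W_h t 1 h.
Proof.
move=> h0; apply: (@derive1_fine_ge0 _
  (fun h' => \int[P]_w \int[leb]_(s in `[t, T]) (W_integrand t 1 h' s w)%:E)%E).
  apply: integral_ge0 => w _; apply: integral_ge0 => s; rewrite /= in_itv /= => /andP[ts _].
  by rewrite lee_fin W_integrand_ge0.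
move=> h' hh'; apply: le_integral_pointwise => w _; apply: le_integral_pointwise => s.
rewrite /= in_itv /= => /andP[ts _].
by rewrite lee_fin W_integrand_nondecreasing.
Qed.

Lemma W_h_antitone t y1 y2 h : 0 < y1 -> y1 <= y2 -> 0 < h ->
  W_h t y2 h <= W_h t y1 h.
Proof.
move=> y1_gt0 y12 h0; have y2_gt0 := lt_le_trans y1_gt0 y12.
rewrite W_h_scale// [leRHS]W_h_scale//.
by apply: ler_wpM2r; [exact: W_h1_ge0|exact: le0_ger_powR].
Qed.

Lemma J_integrand_nondecreasing t z1 z2 h s w : 0 < z1 -> z1 <= z2 -> 0 < h ->
  J_integrand P B T r mu sigma rho m0 m1 kappa delta alpha I fI t z1 h s w <=
  J_integrand P B T r mu sigma rho m0 m1 kappa delta alpha I fI t z2 h s w.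
Proof.
move=> z1_gt0 z12 h0; rewrite /J_integrand; apply: lerB.
  by apply: ler_wpM2r; [exact: expR_ge0|exact: ler_wpM2l].
apply: ler_wpM2l; first by rewrite mulr_ge0 ?expR_ge0.
apply: W_h_antitone; rewrite /Z1 /H1 ?mulr_gt0 ?expR_gt0//.
by apply: ler_wpM2r; [exact: expR_ge0|exact: z12].
Qed.

End model.

Theorem proposition4p2 (R : realType) (d : measure_display) (Omega : measurableType d)
  (P : probability Omega R) (F : R -> set (set Omega)) (B : R -> Omega -> R)
  (T r mu sigma rho m0 m1 kappa delta alpha I fI : R) :
  0 < T -> 0 < r -> 0 < sigma -> 0 < rho -> 0 <= m0 -> 0 <= m1 -> 0 < kappa ->
  0 < delta -> 0 < alpha < 1 -> 0 < I -> 0 < fI ->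
  usual_conditions P F -> is_F_brownian_motion P F B ->
  forall t h, 0 <= t < T -> 0 < h ->
  forall z1 z2, 0 < z1 -> z1 <= z2 ->
  (Jhat P B T r mu sigma rho m0 m1 kappa delta alpha I fI F t z1 h <=
   Jhat P B T r mu sigma rho m0 m1 kappa delta alpha I fI F t z2 h)%E.
Proof.
move=> _ _ _ _ _ m1_ge0 /ltW kappa_ge0 /ltW delta_ge0 /andP[alpha_gt0 alpha_lt1]
  /ltW I_ge0 /ltW fI_ge0 _ _ t h _ h_gt0 z1 z2 z1_gt0 z12.
apply: ge_ereal_sup => _ [tau [tau_stop ->]].
apply: le_ereal_sup_tmp; eexists; first by exists tau; split; [exact: tau_stop|reflexivity].
apply: le_integral_pointwise => w _; apply: le_integral_pointwise => s _.
by rewrite lee_fin J_integrand_nondecreasing.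
Qed.
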